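(* For all $n,k\in\mathbb Z$ one has \[ [x^k y^{n-k}]\,(x+y)^n=\binom{n}{k}_w , \] where the coefficient extraction is as described in the context: for $k\ge 0$ it is the coefficient $a_k$ in the expansion $(x+y)^n=\sum_{k\ge 0}a_k\,x^ky^{n-k}$ in $\mathbb C_w[[x,y,y^{-1}]]$, and for $k<0$ it is the coefficient $b_k$ in the expansion $(x+y)^n=\sum_{k\le n}b_k\,x^ky^{n-k}$ in $\mathbb C_w[[x,x^{-1},y]]$.
   Context: Let $(w(s,t))_{s,t\in\mathbb Z}$ be invertible variables commuting with each other. Let $\mathbb C_w[x,x^{-1},y,y^{-1}]$ be the associative unital $\mathbb C$-algebra generated by $x,x^{-1},y,y^{-1}$ and the $w(s,t)^{\pm1}$, subject to $x^{-1}x=xx^{-1}=1$, $y^{-1}y=yy^{-1}=1$, $yx=w(1,1)xy$, $x\,w(s,t)=w(s+1,t)\,x$, $y\,w(s,t)=w(s,t+1)\,y$ for all $s,t\in\mathbb Z$. $\mathbb C_w[[x,y,y^{-1}]]$ (no negative powers of $x$) and $\mathbb C_w[[x,x^{-1},y]]$ (no negative powers of $y$) denote the corresponding formal power series algebras with the same relations, elements being written as sums of terms (coefficient in the weights)$\cdot x^k y^{m}$. For $n<0$, $(x+y)^n$ is expanded in $\mathbb C_w[[x,y,y^{-1}]]$ as $((1+xy^{-1})y)^n$ (geometric series in $xy^{-1}$), and in $\mathbb C_w[[x,x^{-1},y]]$ as $(x(1+x^{-1}y))^n$ (geometric series in $x^{-1}y$). Product convention: for $l,m\in\mathbb Z$,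 $\prod_{j=l}^m A_j=A_lA_{l+1}\cdots A_m$ if $m>l-1$, $=1$ if $m=l-1$, and $=A_{l-1}^{-1}A_{l-2}^{-1}\cdots A_{m+1}^{-1}$ if $m<l-1$. Big weights: $W(s,t)=\prod_{j=1}^t w(s,j)$. The weight-dependent binomial coefficients $\binom{n}{k}_w$, $n,k\in\mathbb Z$, are the unique family with $\binom{n}{0}_w=\binom{n}{n}_w=1$ for all $n\in\mathbb Z$ and, for all $n,k\in\mathbb Z$ with $(n+1,k)\neq(0,0)$, $\binom{n+1}{k}_w=\binom{n}{k}_w+\binom{n}{k-1}_w\,W(k,n+1-k)$. *)

From mathcomp Require Import all_boot all_order all_algebra.
Set Implicit Arguments. Unset Strict Implicit. Unset Printing Implicit Defensive.
Import Order.TTheory GRing.Theory Num.Theory.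
Local Open Scope ring_scope.

Definition irange (l h : int) : seq int :=
  if h < l then [::] else [seq l + (i%:Z) | i <- iota 0 (`|h - l|%N).+1].

Section WeightedAlgebra.
Variable R : comUnitRingType.

Definition weights := int -> int -> R.

Definition intsum (l h : int) (F : int -> R) : R := \sum_(a <- irange l h) F a.

Definition prodZ (l m : int) (A : int -> R) : R :=
  if l - 1 <= m then \prod_(j <- irange l m) A j
  else \prod_(j <- irange (m + 1) (l - 1)) (A j)^-1.

Definition BigW (w : weights) (s t : int) : R := prodZ 1 t (fun j => w s j).

Definition wbinom_spec (w : weights) (B : int -> int -> R) : Prop :=
  [/\ forall n : int, B n 0 = 1,
      forall n : int, B n n = 1 &
      forall n k : int, (n + 1, k) != (0, 0) ->
        B (n + 1) k = B n k + B n (k - 1) * BigW w k (n + 1 - k)].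

(* Coefficients of the algebra are (Laurent polynomial) expressions in the
   weights, represented as functions of the weight assignment.  Conjugation
   g |-> x^a y^b g y^-b x^-a acts by shifting the weights:
   w(s,t) |-> w(s+a,t+b). *)
Definition shw (a b : int) (w : weights) : weights := fun s t => w (s + a) (t + b).

(* y^b x^c = qcomm b c * x^c y^b in C_w[x,x^-1,y,y^-1]. *)
Definition qcomm (b c : int) (w : weights) : R :=
  prodZ 1 b (fun j => prodZ 1 c (fun i => w i j)).

(* A homogeneous series of total degree sdeg:
     sum_k scf k x^k y^(sdeg - k),
   where k ranges over k >= sbd (in C_w[[x,y,y^-1]]) resp. k <= sbd
   (in C_w[[x,x^-1,y]]). *)
Record ser := Ser { sdeg : int; sbd : int; scf : weights -> int -> R }.

Definition get1 (s : ser) (w : weights) (k : int) : R :=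
  if k < sbd s then 0 else scf s w k.

(* (f x^a y^b)(g x^c y^e) = f (g shifted by (a,b)) (qcomm b c shifted by (a,0)) x^(a+c) y^(b+e) *)
Definition mul1 (s t : ser) : ser :=
  Ser (sdeg s + sdeg t) (sbd s + sbd t) (fun w k =>
    intsum (sbd s) (k - sbd t) (fun a =>
      get1 s w a * get1 t (shw a (sdeg s - a) w) (k - a)
        * qcomm (sdeg s - a) (k - a) (shw a 0 w))).

Definition one1 : ser := Ser 0 0 (fun _ k => (k == 0)%:R).
Definition pow1 (s : ser) (j : nat) : ser := iter j (mul1 s) one1.

Definition xpy1 : ser := Ser 1 0 (fun _ k => ((k == 0) || (k == 1))%:R).
Definition yinv1 : ser := Ser (-1) 0 (fun _ k => (k == 0)%:R).
Definition xyinv1 : ser := Ser 0 1 (fun _ k => (k == 1)%:R).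
(* geometric series (1 + x y^-1)^-1 = sum_j (-1)^j (x y^-1)^j ;
   (x y^-1)^j only has x-exponents >= j, so the sum is finite per coefficient *)
Definition geom1 : ser :=
  Ser 0 0 (fun w k => \sum_(j < (`|k|%N).+1) (-1) ^+ j * get1 (pow1 xyinv1 j) w k).

(* (x+y)^n in C_w[[x,y,y^-1]] : for n < 0, ((1 + x y^-1) y)^n = (y^-1 (1+xy^-1)^-1)^(-n) *)
Definition expand1 (n : int) : ser :=
  if 0 <= n then pow1 xpy1 `|n|%N else pow1 (mul1 yinv1 geom1) `|n|%N.

Definition get2 (s : ser) (w : weights) (k : int) : R :=
  if sbd s < k then 0 else scf s w k.

Definition mul2 (s t : ser) : ser :=
  Ser (sdeg s + sdeg t) (sbd s + sbd t) (fun w k =>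
    intsum (k - sbd t) (sbd s) (fun a =>
      get2 s w a * get2 t (shw a (sdeg s - a) w) (k - a)
        * qcomm (sdeg s - a) (k - a) (shw a 0 w))).

Definition one2 : ser := Ser 0 0 (fun _ k => (k == 0)%:R).
Definition pow2 (s : ser) (j : nat) : ser := iter j (mul2 s) one2.

Definition xpy2 : ser := Ser 1 1 (fun _ k => ((k == 0) || (k == 1))%:R).
Definition xinv2 : ser := Ser (-1) (-1) (fun _ k => (k == -1)%:R).
Definition xinvy2 : ser := Ser 0 (-1) (fun _ k => (k == -1)%:R).
Definition geom2 : ser :=
  Ser 0 0 (fun w k => \sum_(j < (`|k|%N).+1) (-1) ^+ j * get2 (pow2 xinvy2 j) w k).

(* (x+y)^n in C_w[[x,x^-1,y]] : for n < 0, (x(1+x^-1 y))^n = ((1+x^-1y)^-1 x^-1)^(-n) *)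
Definition expand2 (n : int) : ser :=
  if 0 <= n then pow2 xpy2 `|n|%N else pow2 (mul2 geom2 xinv2) `|n|%N.

Definition coeff1 (s : ser) (w : weights) (k m : int) : R :=
  if sdeg s == k + m then get1 s w k else 0.
Definition coeff2 (s : ser) (w : weights) (k m : int) : R :=
  if sdeg s == k + m then get2 s w k else 0.

Definition xycoeff (w : weights) (n k : int) : R :=
  if 0 <= k then coeff1 (expand1 n) w k (n - k)
  else coeff2 (expand2 n) w k (n - k).

End WeightedAlgebra.

(* The coefficients of (x + y)^n obey the defining recurrence of the weighted
   binomials: (x + y)^(n+1) = (x + y)^n (x + y), and moving the last x to the left
   across y^(n+1-k) produces the weight W(k, n+1-k).  In each completion this
   identity holds for all n because it is preserved by left multiplication; the
   base cases are trivial for n >= 0 and amount to (x + y)^-1 (x + y) = 1, i.e. to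
   the geometric series inverting x + y, for n < 0.  For n >= 0 both completions
   contain the same polynomial (x + y)^n, which glues the halves k >= 0 and k < 0
   together at k = 0.
   Conversely, since the weights are invertible, the difference of two solutions
   vanishes on the column k = 0, and the homogeneous recurrence, anchored by the
   zero diagonal, propagates vanishing from a column to both of its neighbours. *)

From mathcomp Require Import all_boot all_order all_algebra.
From mathcomp Require Import zify ring.
Set Implicit Arguments. Unset Strict Implicit. Unset Printing Implicit Defensive.
Import Order.TTheory GRing.Theory Num.Theory.
Local Open Scope ring_scope.

Lemma int_ind_from (P : int -> Prop) (m0 : int) : P m0 ->
  (forall m, P m -> P (m + 1)) -> (forall m, P (m + 1) -> P m) -> forall m, P m.
Proof.
move=> P0 Pup Pdown.
have up (n : nat) : P (m0 + n%:Z).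
  elim: n => [|n IH]; first by rewrite addr0.
  by rewrite (_ : m0 + n.+1%:Z = m0 + n%:Z + 1); [exact: Pup | lia].
have down (n : nat) : P (m0 - n%:Z).
  elim: n => [|n IH]; first by rewrite subr0.
  by apply: Pdown; rewrite (_ : m0 - n.+1%:Z + 1 = m0 - n%:Z) //; lia.
move=> m; have [le_m0m|lt_mm0] := lerP m0 m.
  by rewrite (_ : m = m0 + (`|m - m0|%N)%:Z) //; lia.
by rewrite (_ : m = m0 - (`|m - m0|%N)%:Z) //; lia.
Qed.

Lemma mem_irange l h a : (a \in irange l h) = (l <= a <= h).
Proof.
rewrite /irange; case: ltrP => hl.
  by rewrite in_nil; apply/esym/negP => /andP[]; lia.
apply/mapP/idP => [[i]|/andP[la ah]].
  by rewrite mem_iota => /andP[_ hi] ->; apply/andP; split; lia.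
by exists `|a - l|%N; [rewrite mem_iota; apply/andP; split; lia | lia].
Qed.

Lemma irange_uniq l h : uniq (irange l h).
Proof.
rewrite /irange; case: ltrP => // _.
by rewrite map_inj_uniq ?iota_uniq // => i j /=; lia.
Qed.

Lemma perm_big_irange (T : Type) (idx : T) (op : Monoid.com_law idx)
    (s : seq int) l h (F : int -> T) :
  uniq s -> (forall a, (a \in s) = (l <= a <= h)) ->
  \big[op/idx]_(a <- irange l h) F a = \big[op/idx]_(a <- s) F a.
Proof.
move=> s_uniq mem_s; apply/perm_big/uniq_perm; rewrite ?irange_uniq //.
by move=> a; rewrite mem_irange mem_s.
Qed.

Section IntSum.
Variable R : comUnitRingType.
Implicit Types F G : int -> R.

Lemma eq_intsum l h F G : (forall a, F a = G a) -> intsum l h F = intsum l h G.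
Proof. by move=> eFG; apply: eq_bigr. Qed.

Lemma intsumD l h F G : intsum l h (fun a => F a + G a) = intsum l h F + intsum l h G.
Proof. exact: big_split. Qed.

Lemma intsum_mulr l h F c : intsum l h F * c = intsum l h (fun a => F a * c).
Proof. exact: big_distrl. Qed.

Lemma intsum0 l h F : (forall a, F a = 0) -> intsum l h F = 0.
Proof. by move=> F0; rewrite /intsum big1. Qed.

Lemma intsum_widen l h l' h' F : l' <= l -> h <= h' ->
  (forall a, ~~ (l <= a <= h) -> F a = 0) -> intsum l' h' F = intsum l h F.
Proof.
move=> hl hh F0; rewrite /intsum (bigID (fun a => l <= a <= h)) /=.
rewrite [X in _ + X]big1_seq ?addr0; last by move=> a /andP[/F0].
rewrite -big_filter; apply/esym/perm_big_irange; first by rewrite filter_uniq ?irange_uniq.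
by move=> a; rewrite mem_filter mem_irange; apply/idP/idP => /andP[]; lia.
Qed.

Lemma intsum1 l h p F : l <= p <= h -> (forall a, a != p -> F a = 0) ->
  intsum l h F = F p.
Proof.
move=> hp F0; rewrite /intsum (bigD1_seq p) ?irange_uniq ?mem_irange //=.
by rewrite big1 ?addr0 // => a /F0.
Qed.

End IntSum.

Section ProdZ.
Variable R : comUnitRingType.
Implicit Types A B : int -> R.

Definition unitf A := forall j, A j \is a GRing.unit.

Lemma prodZ_unit l m A : unitf A -> prodZ l m A \is a GRing.unit.
Proof.
move=> uA; rewrite /prodZ; case: ifP => _;
  apply: (big_ind (fun x => x \is a GRing.unit)) => [|x y ux uy|j _];
  by rewrite ?unitr1 ?unitrM ?unitrV ?ux ?uy.
Qed.

Lemma prodZ_nil l A : prodZ l (l - 1) A = 1.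
Proof. by rewrite /prodZ lexx /irange ifT ?big_nil //; lia. Qed.

Lemma prodZ_recr l m A : unitf A -> prodZ l m A = prodZ l (m - 1) A * A m.
Proof.
move=> uA; have [lm|ml] := lerP (l - 1) (m - 1).
  rewrite /prodZ !ifT; try lia.
  rewrite (perm_big_irange _ _ (s := rcons (irange l (m - 1)) m)) ?big_rcons //.
    by rewrite rcons_uniq irange_uniq mem_irange andbT; apply/negP => /andP[]; lia.
  by move=> a; rewrite mem_rcons in_cons mem_irange; case: eqVneq => [->|] /=; lia.
rewrite [prodZ l (m - 1) A]/prodZ ifF; last by lia.
rewrite (_ : m - 1 + 1 = m); last by lia.
rewrite (perm_big_irange _ _ (s := m :: irange (m + 1) (l - 1))); first last.
- by move=> a; rewrite in_cons mem_irange; case: eqVneq => [->|] /=; lia.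
- by rewrite cons_uniq irange_uniq mem_irange andbT; apply/negP => /andP[]; lia.
rewrite big_cons mulrAC mulVr ?mul1r //.
rewrite /prodZ; case: ifP => // ?; rewrite (_ : m = l - 1); last by lia.
by rewrite /irange !ifT ?big_nil //; lia.
Qed.

Lemma prodZ_nilV l A : unitf A -> prodZ l (l - 2) A = (A (l - 1))^-1.
Proof.
move=> uA; apply: (mulIr (uA (l - 1))); rewrite mulVr // -(prodZ_nil l A).
by rewrite [RHS]prodZ_recr // (_ : l - 1 - 1 = l - 2) //; lia.
Qed.

Lemma prodZ_uniq (f : int -> R) l m0 A : unitf A ->
  f m0 = prodZ l m0 A -> (forall m, f m = f (m - 1) * A m) -> forall m, f m = prodZ l m A.
Proof.
move=> uA f0 frec; apply: (int_ind_from (m0 := m0)) => // [m IH|m IH].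
  by rewrite frec prodZ_recr // addrK IH.
apply: (mulIr (uA (m + 1))); have := frec (m + 1).
by rewrite IH prodZ_recr // !addrK => ->.
Qed.

Lemma congr_prodZ l l' m m' A B : l = l' -> m = m' -> (forall j, A j = B j) ->
  prodZ l m A = prodZ l' m' B.
Proof.
by move=> -> -> eAB; rewrite /prodZ; case: ifP => _; apply: eq_bigr => j _; rewrite eAB.
Qed.

Lemma prodZ_split l p m A : unitf A -> prodZ l m A = prodZ l p A * prodZ (p + 1) m A.
Proof.
move=> uA; apply/esym; move: m; apply: (prodZ_uniq (m0 := p)) => // [|k].
  by have := prodZ_nil (p + 1) A; rewrite addrK => ->; rewrite mulr1.
by rewrite -mulrA -prodZ_recr.
Qed.

Lemma prodZ_shift l m b A : unitf A ->
  prodZ l m (fun j => A (j + b)) = prodZ (l + b) (m + b) A.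
Proof.
move=> uA; apply/esym; move: m; apply: (prodZ_uniq (m0 := l - 1)) => [j|//|k].
- exact: uA.
- by rewrite prodZ_nil (_ : l - 1 + b = l + b - 1) ?prodZ_nil //; lia.
- by rewrite prodZ_recr // (_ : k - 1 + b = k + b - 1) //; lia.
Qed.

Lemma prodZM l m A B : unitf A -> unitf B ->
  prodZ l m (fun j => A j * B j) = prodZ l m A * prodZ l m B.
Proof.
move=> uA uB; apply/esym; move: m; apply: (prodZ_uniq (m0 := l - 1)) => [j|//|k].
- by rewrite unitrM uA uB.
- by rewrite !prodZ_nil mulr1.
- by rewrite [prodZ l k A]prodZ_recr // [prodZ l k B]prodZ_recr //; ring.
Qed.

Lemma prodZ1 l m : prodZ l m (fun _ => (1 : R)) = 1.
Proof.
apply/esym; move: m; apply: (prodZ_uniq (m0 := l - 1)) => [j|//|k];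
  by rewrite ?unitr1 ?mulr1 ?prodZ_nil.
Qed.

Lemma prodZV l m A : unitf A ->
  prodZ l m (fun j => (A j)^-1) = (prodZ l m A)^-1.
Proof.
move=> uA; apply/esym; move: m; apply: (prodZ_uniq (m0 := l - 1)) => [j|//|k].
- by rewrite unitrV.
- by rewrite !prodZ_nil invr1.
- by rewrite prodZ_recr // invrM ?prodZ_unit // mulrC.
Qed.

End ProdZ.

Section Weights.
Variable R : comUnitRingType.
Implicit Types v w : weights R.

Definition unitw v := forall s t, v s t \is a GRing.unit.

Lemma unitw_shw a b v : unitw v -> unitw (shw a b v).
Proof. by move=> uv s t; apply: uv. Qed.

Lemma BigW_unit v s t : unitw v -> BigW v s t \is a GRing.unit.
Proof. by move=> uv; apply: prodZ_unit => j; apply: uv. Qed.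

Lemma BigW0 v s : BigW v s 0 = 1.
Proof. exact: prodZ_nil. Qed.

Lemma BigW_shw a b v s t : unitw v ->
  BigW (shw a b v) s t = prodZ (1 + b) (t + b) (fun j => v (s + a) j).
Proof. by move=> uv; rewrite /BigW /shw prodZ_shift // => j; apply: uv. Qed.

Lemma BigW_split v s p t : unitw v -> BigW v s t = BigW v s p * prodZ (p + 1) t (v s).
Proof. by move=> uv; apply: prodZ_split => j; apply: uv. Qed.

Lemma qcommr0 b v : qcomm b 0 v = 1.
Proof.
by rewrite /qcomm (@congr_prodZ _ 1 1 b b _ (fun _ => 1)) ?prodZ1 // => j; apply: prodZ_nil.
Qed.

Lemma qcomm_recr a b c v : unitw v ->
  qcomm b c (shw a 0 v) = qcomm b (c - 1) (shw a 0 v) * BigW v (c + a) b.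
Proof.
move=> uv; rewrite /qcomm /BigW -prodZM => [|j|j]; first last.
- exact: uv.
- by apply: prodZ_unit => i; apply: (unitw_shw a 0 uv).
apply: congr_prodZ => // j.
by rewrite prodZ_recr /shw ?addr0 // => i; apply: (unitw_shw a 0 uv).
Qed.

Lemma qcommrN1 b s v : unitw v -> qcomm b (-1) (shw s 0 v) = (BigW v s b)^-1.
Proof.
move=> uv; rewrite /qcomm /BigW -prodZV => [|j]; last exact: uv.
apply: congr_prodZ => // j.
by rewrite (prodZ_nilV 1) /shw ?add0r ?addr0 // => i; apply: (unitw_shw s 0 uv).
Qed.

End Weights.

Section Supports.
Variable R : comUnitRingType.
Implicit Types (v w : weights R) (s : ser R).

Lemma get1_lt s w k : k < sbd s -> get1 s w k = 0.
Proof. by rewrite /get1 => ->. Qed.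

Lemma get2_gt s w k : sbd s < k -> get2 s w k = 0.
Proof. by rewrite /get2 => ->. Qed.

Lemma get1_ge s w k : sbd s <= k -> get1 s w k = scf s w k.
Proof. by rewrite /get1 ltNge => ->. Qed.

Lemma get2_le s w k : k <= sbd s -> get2 s w k = scf s w k.
Proof. by rewrite /get2 ltNge => ->. Qed.

Lemma sdeg_pow1 s m : sdeg (pow1 s m) = m%:Z * sdeg s.
Proof. by elim: m => [|m IH] /=; rewrite ?mul0r // IH; lia. Qed.
Lemma sbd_pow1 s m : sbd (pow1 s m) = m%:Z * sbd s.
Proof. by elim: m => [|m IH] /=; rewrite ?mul0r // IH; lia. Qed.
Lemma sdeg_pow2 s m : sdeg (pow2 s m) = m%:Z * sdeg s.
Proof. by elim: m => [|m IH] /=; rewrite ?mul0r // IH; lia. Qed.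
Lemma sbd_pow2 s m : sbd (pow2 s m) = m%:Z * sbd s.
Proof. by elim: m => [|m IH] /=; rewrite ?mul0r // IH; lia. Qed.

Lemma get1_monomial d b w k : get1 (Ser d b (fun _ k => (k == b)%:R)) w k = (k == b)%:R.
Proof. by rewrite /get1 /=; case: ltrP => // k_lt; rewrite lt_eqF. Qed.

Lemma get2_monomial d b w k : get2 (Ser d b (fun _ k => (k == b)%:R)) w k = (k == b)%:R.
Proof. by rewrite /get2 /=; case: ltrP => // k_gt; rewrite gt_eqF. Qed.

Lemma get1_one1 w k : get1 (one1 R) w k = (k == 0)%:R.
Proof. exact: get1_monomial. Qed.

Lemma get2_one2 w k : get2 (one2 R) w k = (k == 0)%:R.
Proof. exact: get2_monomial. Qed.

End Supports.

Section Pascal.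
Variable R : comUnitRingType.
Implicit Types (v w : weights R) (s t L S T : ser R).

Definition conv_term (get : ser R -> weights R -> int -> R) s t w k a : R :=
  get s w a * get t (shw a (sdeg s - a) w) (k - a)
    * qcomm (sdeg s - a) (k - a) (shw a 0 w).

(* [pascal get S T] reads T = S (x + y) off the coefficients, since
   x^(k-1) y^(d-k+1) x = W(k, d-k+1) x^k y^(d-k+1). *)
Definition pascal (get : ser R -> weights R -> int -> R) S T := forall v, unitw v ->
  forall k, get T v k = get S v k + get S v (k - 1) * BigW v k (sdeg T - k).

Lemma BigW_qcomm_exchange w e d a k : unitw w ->
  BigW (shw a (e - a) w) (k - a) (d - (k - a)) * qcomm (e - a) (k - a) (shw a 0 w)
  = qcomm (e - a) (k - 1 - a) (shw a 0 w) * BigW w k (e + d - k).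
Proof.
move=> uw; rewrite BigW_shw // qcomm_recr // subrK (_ : k - a - 1 = k - 1 - a); last by ring.
rewrite mulrCA; congr (_ * _); rewrite mulrC [RHS](@BigW_split _ w k (e - a)) //.
by congr (_ * _); apply: congr_prodZ => //; ring.
Qed.

Section Transfer.
Variable get : ser R -> weights R -> int -> R.
Variable mul : ser R -> ser R -> ser R.
Hypothesis sdeg_mul : forall s t, sdeg (mul s t) = sdeg s + sdeg t.
Hypothesis get_mul : forall s t w k (N : nat), (`|sbd s| + `|sbd t| + `|k| <= N)%N ->
  get (mul s t) w k = intsum (- N%:Z) N%:Z (conv_term get s t w k).

(* Associativity: (L S) (x + y) = L (S (x + y)). *)
Lemma pascal_mull L S T : pascal get S T -> pascal get (mul L S) (mul L T).
Proof.
move=> ST w uw k; set N := (`|sbd L| + `|sbd S| + `|sbd T| + `|k| + 1)%N.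
rewrite !(@get_mul _ _ _ _ N); try lia.
rewrite intsum_mulr -intsumD; apply: eq_intsum => a.
rewrite /conv_term ST; last exact: unitw_shw.
rewrite sdeg_mul (_ : k - a - 1 = k - 1 - a); last by ring.
by rewrite mulrDr mulrDl -!mulrA BigW_qcomm_exchange.
Qed.

Lemma pascal_iter s one : pascal get one (mul s one) ->
  forall m, pascal get (iter m (mul s) one) (iter m.+1 (mul s) one).
Proof. by move=> h0; elim=> // m IH; apply: pascal_mull. Qed.

Lemma pascal_iter_rev s one : pascal get (mul s one) one ->
  forall m, pascal get (iter m.+1 (mul s) one) (iter m (mul s) one).
Proof. by move=> h0; elim=> // m IH; apply: pascal_mull. Qed.

End Transfer.

Lemma get1_mul1 s t w k (N : nat) : (`|sbd s| + `|sbd t| + `|k| <= N)%N ->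
  get1 (mul1 s t) w k = intsum (- N%:Z) N%:Z (conv_term (@get1 R) s t w k).
Proof.
move=> hN; have out a : ~~ (sbd s <= a <= k - sbd t) -> conv_term (@get1 R) s t w k a = 0.
  move=> ha; have [lt_a|le_a] := ltrP a (sbd s); first by rewrite /conv_term get1_lt ?mul0r.
  by rewrite /conv_term (get1_lt (s := t)) ?mulr0 ?mul0r //; lia.
have [hk|hk] := ltrP k (sbd s + sbd t).
  by rewrite get1_lt //; apply/esym/intsum0 => a; apply: out; lia.
rewrite get1_ge //= (intsum_widen _ _ out) //; lia.
Qed.

Lemma get2_mul2 s t w k (N : nat) : (`|sbd s| + `|sbd t| + `|k| <= N)%N ->
  get2 (mul2 s t) w k = intsum (- N%:Z) N%:Z (conv_term (@get2 R) s t w k).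
Proof.
move=> hN; have out a : ~~ (k - sbd t <= a <= sbd s) -> conv_term (@get2 R) s t w k a = 0.
  move=> ha; have [lt_a|le_a] := ltrP (sbd s) a; first by rewrite /conv_term get2_gt ?mul0r.
  by rewrite /conv_term (get2_gt (s := t)) ?mulr0 ?mul0r //; lia.
have [hk|hk] := ltrP (sbd s + sbd t) k.
  by rewrite get2_gt //; apply/esym/intsum0 => a; apply: out; lia.
rewrite get2_le //= (intsum_widen _ _ out) //; lia.
Qed.

End Pascal.

Section Polynomial.
Variable R : comUnitRingType.
Implicit Types (v w : weights R) (s : ser R).

Lemma get1_mul1_one1 s w k : get1 (mul1 s (one1 R)) w k = get1 s w k.
Proof.
have [lt_k|le_k] := ltrP k (sbd s); first by rewrite !get1_lt //= addr0.
rewrite (@get1_mul1 _ _ _ _ _ (`|sbd s| + `|k|)) /=; last by lia.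
rewrite (intsum1 (p := k)); first by rewrite /conv_term get1_one1 subrr qcommr0 !mulr1.
  by lia.
by move=> a ak; rewrite /conv_term get1_one1 subr_eq0 eq_sym (negbTE ak) mulr0 mul0r.
Qed.

Lemma get2_mul2_one2 s w k : get2 (mul2 s (one2 R)) w k = get2 s w k.
Proof.
have [lt_k|le_k] := ltrP (sbd s) k; first by rewrite !get2_gt //= addr0.
rewrite (@get2_mul2 _ _ _ _ _ (`|sbd s| + `|k|)) /=; last by lia.
rewrite (intsum1 (p := k)); first by rewrite /conv_term get2_one2 subrr qcommr0 !mulr1.
  by lia.
by move=> a ak; rewrite /conv_term get2_one2 subr_eq0 eq_sym (negbTE ak) mulr0 mul0r.
Qed.

Lemma pascal_xpy1 : pascal (@get1 R) (one1 R) (mul1 (xpy1 R) (one1 R)).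
Proof.
move=> v uv k; rewrite get1_mul1_one1 !get1_one1 subr_eq0 /get1 /=.
case: (eqVneq k 0) => [->|k0] /=; first by rewrite mul0r addr0.
case: (eqVneq k 1) => [->|k1] /=; first by rewrite subrr BigW0 mulr1 add0r.
by rewrite mul0r addr0; case: ifP.
Qed.

Lemma pascal_xpy2 : pascal (@get2 R) (one2 R) (mul2 (xpy2 R) (one2 R)).
Proof.
move=> v uv k; rewrite get2_mul2_one2 !get2_one2 subr_eq0 /get2 /=.
case: (eqVneq k 0) => [->|k0] /=; first by rewrite mul0r addr0.
case: (eqVneq k 1) => [->|k1] /=; first by rewrite subrr BigW0 mulr1 add0r.
by rewrite mul0r addr0; case: ifP.
Qed.

End Polynomial.

Section Inverse1.
Variable R : comUnitRingType.
Implicit Types v w : weights R.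

Definition inv_xpy1 : ser R := mul1 (yinv1 R) (geom1 R).

(* (x y^-1)^j = xyinv_coef j * x^j y^-j, computed as (x y^-1) (x y^-1)^(j-1). *)
Fixpoint xyinv_coef (j : nat) v : R :=
  if j is j'.+1 then xyinv_coef j' (shw 1 (-1) v) * qcomm (-1) j' (shw 1 0 v) else 1.

Lemma get1_pow_xyinv j v k :
  get1 (pow1 (xyinv1 R) j) v k = (k == j%:Z)%:R * xyinv_coef j v.
Proof.
elim: j v k => [|j IH] v k; first by rewrite get1_one1 mulr1.
have [lt_kj|le_jk] := ltrP k j.+1%:Z.
  by rewrite get1_lt ?sbd_pow1 /=; [rewrite (_ : (k == _) = false) ?mul0r //|]; lia.
rewrite (@get1_mul1 _ _ _ _ _ (`|k| + j + 2)) /= ?sbd_pow1 /=; last by lia.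
rewrite (intsum1 (p := 1)); last 2 first.
- by lia.
- by move=> a a1; rewrite /conv_term get1_monomial (negbTE a1) !mul0r.
rewrite /conv_term get1_monomial eqxx mul1r IH.
case: (eqVneq k j.+1%:Z) => [->|kj].
  by rewrite (_ : j.+1%:Z - 1 = j%:Z) ?eqxx ?mul1r //; lia.
by rewrite (_ : (k - 1 == j%:Z) = false) ?mul0r //; lia.
Qed.

Lemma get1_geom1_lt0 v k : k < 0 -> get1 (geom1 R) v k = 0.
Proof. by move=> k_lt0; rewrite get1_lt. Qed.

Lemma get1_geom1 v (k : nat) : get1 (geom1 R) v k%:Z = (-1) ^+ k * xyinv_coef k v.
Proof.
rewrite get1_ge //= big_ord_recr /= big1 ?add0r => [|i _].
  by rewrite get1_pow_xyinv eqxx mul1r.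
by rewrite get1_pow_xyinv (_ : (_ == _) = false) ?mul0r ?mulr0 //; have := ltn_ord i; lia.
Qed.

Lemma get1_inv_xpy1 v k :
  get1 inv_xpy1 v k = get1 (geom1 R) (shw 0 (-1) v) k * qcomm (-1) k (shw 0 0 v).
Proof.
have [k_lt0|k_ge0] := ltrP k 0; first by rewrite !get1_lt ?mul0r.
rewrite (@get1_mul1 _ _ _ _ _ (`|k|)) /=; last by lia.
rewrite (intsum1 (p := 0)); last 2 first.
- by lia.
- by move=> a a0; rewrite /conv_term get1_monomial (negbTE a0) !mul0r.
by rewrite /conv_term get1_monomial eqxx mul1r !subr0.
Qed.

Lemma xyinv_coefS j v : unitw v ->
  xyinv_coef j.+1 v = xyinv_coef j v * BigW v j.+1%:Z (- j%:Z).
Proof.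
elim: j v => [|j IH] v uv; first by rewrite /= qcommr0 oppr0 BigW0.
change (xyinv_coef j.+1 (shw 1 (-1) v) * qcomm (-1) j.+1 (shw 1 0 v) =
  xyinv_coef j (shw 1 (-1) v) * qcomm (-1) j (shw 1 0 v) * BigW v j.+2 (- j.+1%:Z)).
rewrite IH; last exact: unitw_shw.
rewrite qcomm_recr // -!mulrA; congr (_ * _).
rewrite (_ : j.+1%:Z - 1 = j%:Z); last by lia.
rewrite mulrCA; congr (_ * _); rewrite BigW_shw // [RHS](@BigW_split _ v _ (-1)) // mulrC.
rewrite (_ : j.+1%:Z + 1 = j.+2%:Z); last by lia.
by congr (_ * _); apply: congr_prodZ => [||i]; first lia; last by []; lia.
Qed.

Lemma pascal_inv_xpy1 : pascal (@get1 R) (mul1 inv_xpy1 (one1 R)) (one1 R).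
Proof.
move=> v uv k; rewrite !get1_mul1_one1 get1_one1 !get1_inv_xpy1 sub0r.
have [k_lt0|k_ge0] := ltrP k 0.
  by rewrite !get1_geom1_lt0 ?lt_eqF ?mul0r ?addr0 //; lia.
have [[|n] ->] : exists n : nat, k = n%:Z by exists `|k|%N; lia.
  by rewrite [get1 _ _ (_ - 1)]get1_geom1_lt0 // get1_geom1 qcommr0 !mul0r !mulr1 addr0.
rewrite (_ : n.+1%:Z - 1 = n%:Z); last by lia.
rewrite !get1_geom1 xyinv_coefS; last exact: unitw_shw.
rewrite qcomm_recr // !addr0 (_ : n.+1%:Z - 1 = n%:Z); last by lia.
have -> : BigW v n.+1 (- n.+1%:Z) = BigW (shw 0 (-1) v) n.+1 (- n%:Z) * BigW v n.+1 (-1).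
  rewrite BigW_shw // [LHS](@BigW_split _ v _ (-1)) // mulrC.
  by congr (_ * _); apply: congr_prodZ => [||i]; rewrite ?addr0 //; lia.
by rewrite exprS (_ : n.+1%:Z == 0 = false) // mulr0n; ring.
Qed.

End Inverse1.

Section Inverse2.
Variable R : comUnitRingType.
Implicit Types v w : weights R.

Definition inv_xpy2 : ser R := mul2 (geom2 R) (xinv2 R).

(* (x^-1 y)^j = xinvy_coef j * x^-j y^j, computed as (x^-1 y) (x^-1 y)^(j-1). *)
Fixpoint xinvy_coef (j : nat) v : R :=
  if j is j'.+1 then xinvy_coef j' (shw (-1) 1 v) * qcomm 1 (- j'%:Z) (shw (-1) 0 v) else 1.

Lemma get2_pow_xinvy j v k :
  get2 (pow2 (xinvy2 R) j) v k = (k == - j%:Z)%:R * xinvy_coef j v.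
Proof.
elim: j v k => [|j IH] v k; first by rewrite get2_one2 mulr1.
have [lt_jk|le_kj] := ltrP (- j.+1%:Z) k.
  by rewrite get2_gt ?sbd_pow2 /=; [rewrite (_ : (k == _) = false) ?mul0r //|]; lia.
rewrite (@get2_mul2 _ _ _ _ _ (`|k| + j + 2)) /= ?sbd_pow2 /=; last by lia.
rewrite (intsum1 (p := -1)); last 2 first.
- by lia.
- by move=> a a1; rewrite /conv_term get2_monomial (negbTE a1) !mul0r.
rewrite /conv_term get2_monomial eqxx mul1r IH.
have [->|kj] := eqVneq k (- j.+1%:Z).
  by rewrite (_ : - j.+1%:Z - -1 = - j%:Z) ?eqxx ?mul1r //; lia.
by rewrite (_ : (k - -1 == - j%:Z) = false) ?mul0r //; lia.
Qed.

Lemma get2_geom2_gt0 v k : 0 < k -> get2 (geom2 R) v k = 0.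
Proof. by move=> k_gt0; rewrite get2_gt. Qed.

Lemma get2_geom2 v (k : nat) : get2 (geom2 R) v (- k%:Z) = (-1) ^+ k * xinvy_coef k v.
Proof.
rewrite get2_le /=; last by lia.
rewrite (_ : `|- k%:Z|%N = k); last by lia.
rewrite big_ord_recr /= big1 ?add0r => [|i _].
  by rewrite get2_pow_xinvy eqxx mul1r.
by rewrite get2_pow_xinvy (_ : (_ == _) = false) ?mul0r ?mulr0 //; have := ltn_ord i; lia.
Qed.

Lemma get2_inv_xpy2 v k : unitw v ->
  get2 inv_xpy2 v k = get2 (geom2 R) v (k + 1) * (BigW v (k + 1) (- (k + 1)))^-1.
Proof.
move=> uv; have [k_gt|k_le] := ltrP (-1) k.
  by rewrite !get2_gt ?mul0r //=; lia.
rewrite (@get2_mul2 _ _ _ _ _ (`|k| + 1)) /=; last by lia.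
rewrite (intsum1 (p := k + 1)); last 2 first.
- by lia.
- move=> a a1; rewrite /conv_term get2_monomial (_ : (k - a == -1) = false) ?mulr0 ?mul0r //.
  by lia.
rewrite /conv_term get2_monomial (_ : k - (k + 1) = -1); last by lia.
by rewrite eqxx mulr1 sub0r qcommrN1.
Qed.

Lemma xinvy_coefS j v : unitw v ->
  xinvy_coef j.+1 v = xinvy_coef j v * (BigW v (- j%:Z) j%:Z)^-1.
Proof.
elim: j v => [|j IH] v uv; first by rewrite /= oppr0 qcommr0 BigW0 invr1.
change (xinvy_coef j.+1 (shw (-1) 1 v) * qcomm 1 (- j.+1%:Z) (shw (-1) 0 v) =
  xinvy_coef j (shw (-1) 1 v) * qcomm 1 (- j%:Z) (shw (-1) 0 v) * (BigW v (- j.+1%:Z) j.+1%:Z)^-1).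
rewrite IH; last exact: unitw_shw.
rewrite [qcomm _ (- j%:Z) _]qcomm_recr // -!mulrA; congr (_ * _).
rewrite (_ : - j%:Z - 1 = - j.+1%:Z); last by lia.
rewrite [LHS]mulrC; congr (_ * _).
have -> : BigW v (- j.+1%:Z) j.+1%:Z = BigW v (- j.+1%:Z) 1 * BigW (shw (-1) 1 v) (- j%:Z) j%:Z.
  rewrite BigW_shw // (BigW_split _ 1) //.
  by congr (_ * _); apply: congr_prodZ => [||i]; rewrite ?addr0 //; try congr v; lia.
have uW1 := BigW_unit (- j.+1%:Z) 1 uv.
have uW2 := BigW_unit (- j%:Z) j (unitw_shw (-1) 1 uv).
by rewrite invrM // mulrCA divrr // mulr1.
Qed.

Lemma pascal_inv_xpy2 : pascal (@get2 R) (mul2 inv_xpy2 (one2 R)) (one2 R).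
Proof.
move=> v uv k; rewrite !get2_mul2_one2 get2_one2 !get2_inv_xpy2 // subrK sub0r.
rewrite mulrVK ?BigW_unit //.
have [k_gt0|k_le0] := ltrP 0 k.
  by rewrite !get2_geom2_gt0 ?gt_eqF ?mul0r ?addr0 //; lia.
have [[|n] ->] : exists n : nat, k = - n%:Z by exists `|k|%N; lia.
  rewrite get2_geom2 [get2 _ _ (_ + 1)]get2_geom2_gt0; last by lia.
  by rewrite oppr0 eqxx !mul0r add0r expr0 mul1r.
rewrite (_ : - n.+1%:Z + 1 = - n%:Z); last by lia.
rewrite !get2_geom2 (_ : - - n%:Z = n%:Z); last by lia.
by rewrite xinvy_coefS // exprS (_ : - n.+1%:Z == 0 = false) // mulr0n; ring.
Qed.

End Inverse2.

Section Expansion.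
Variable R : comUnitRingType.

Lemma expand1_neg (m : nat) : expand1 R (- m%:Z) = pow1 (inv_xpy1 R) m.
Proof. by case: m => // m; rewrite /expand1 ifF. Qed.

Lemma expand2_neg (m : nat) : expand2 R (- m%:Z) = pow2 (inv_xpy2 R) m.
Proof. by case: m => // m; rewrite /expand2 ifF. Qed.

Lemma sdeg_expand1 n : sdeg (expand1 R n) = n.
Proof. by case: n => m; rewrite ?NegzE ?expand1_neg sdeg_pow1 /=; lia. Qed.

Lemma sbd_expand1 n : sbd (expand1 R n) = 0.
Proof. by case: n => m; rewrite ?NegzE ?expand1_neg sbd_pow1 /=; lia. Qed.

Lemma sdeg_expand2 n : sdeg (expand2 R n) = n.
Proof. by case: n => m; rewrite ?NegzE ?expand2_neg sdeg_pow2 /=; lia. Qed.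

Lemma sbd_expand2 n : sbd (expand2 R n) = n.
Proof. by case: n => m; rewrite ?NegzE ?expand2_neg sbd_pow2 /=; lia. Qed.

Lemma pascal_expand1 n : pascal (@get1 R) (expand1 R n) (expand1 R (n + 1)).
Proof.
case: n => m.
  rewrite -PoszD addn1.
  apply: (pascal_iter (mul := @mul1 R) (fun _ _ => erefl) (@get1_mul1 R) (@pascal_xpy1 R) m).
rewrite NegzE (_ : - m.+1%:Z + 1 = - m%:Z) ?expand1_neg; last by lia.
apply: (pascal_iter_rev (mul := @mul1 R) (fun _ _ => erefl) (@get1_mul1 R) (@pascal_inv_xpy1 R) m).
Qed.

Lemma pascal_expand2 n : pascal (@get2 R) (expand2 R n) (expand2 R (n + 1)).
Proof.
case: n => m.
  rewrite -PoszD addn1.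
  apply: (pascal_iter (mul := @mul2 R) (fun _ _ => erefl) (@get2_mul2 R) (@pascal_xpy2 R) m).
rewrite NegzE (_ : - m.+1%:Z + 1 = - m%:Z) ?expand2_neg; last by lia.
apply: (pascal_iter_rev (mul := @mul2 R) (fun _ _ => erefl) (@get2_mul2 R) (@pascal_inv_xpy2 R) m).
Qed.

End Expansion.

Section Binomial.
Variable R : comUnitRingType.
Variable w : weights R.
Hypothesis uw : unitw w.

Let coef1 n k := get1 (expand1 R n) w k.
Let coef2 n k := get2 (expand2 R n) w k.

Lemma coef1S n k : coef1 (n + 1) k = coef1 n k + coef1 n (k - 1) * BigW w k (n + 1 - k).
Proof. by rewrite /coef1 pascal_expand1 // sdeg_expand1. Qed.

Lemma coef2S n k : coef2 (n + 1) k = coef2 n k + coef2 n (k - 1) * BigW w k (n + 1 - k).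
Proof. by rewrite /coef2 pascal_expand2 // sdeg_expand2. Qed.

Lemma coef1_lt0 n k : k < 0 -> coef1 n k = 0.
Proof. by move=> k_lt0; rewrite /coef1 get1_lt ?sbd_expand1. Qed.

Lemma coef2_gt n k : n < k -> coef2 n k = 0.
Proof. by move=> lt_nk; rewrite /coef2 get2_gt ?sbd_expand2. Qed.

Lemma coef1_n0 n : coef1 n 0 = 1.
Proof.
move: n; apply: (int_ind_from (m0 := 0)) => [|n IH|n IH]; first exact: get1_one1.
  by rewrite coef1S IH [coef1 _ (_ - 1)]coef1_lt0 ?mul0r ?addr0.
by rewrite -IH coef1S [coef1 _ (_ - 1)]coef1_lt0 ?mul0r ?addr0.
Qed.

Lemma coef2_nn n : coef2 n n = 1.
Proof.
move: n; apply: (int_ind_from (m0 := 0)) => [|n IH|n IH]; first exact: get2_one2.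
  by rewrite coef2S addrK subrr BigW0 mulr1 IH [coef2 _ (_ + 1)]coef2_gt ?add0r //; lia.
by rewrite -IH coef2S addrK subrr BigW0 mulr1 [coef2 _ (_ + 1)]coef2_gt ?add0r //; lia.
Qed.

Lemma coef1_coef2_nat (m : nat) k : coef1 m k = coef2 m k.
Proof.
elim: m k => [|m IH] k; first by rewrite /coef1 /coef2 get1_one1 get2_one2.
by rewrite -addn1 PoszD coef1S coef2S !IH.
Qed.

Lemma xycoeff_ge0 n k : 0 <= k -> xycoeff w n k = coef1 n k.
Proof. by move=> k_ge0; rewrite /xycoeff k_ge0 /coeff1 sdeg_expand1 subrKC eqxx. Qed.

Lemma xycoeff_lt0 n k : k < 0 -> xycoeff w n k = coef2 n k.
Proof. by move=> k_lt0; rewrite /xycoeff leNgt k_lt0 /coeff2 sdeg_expand2 subrKC eqxx. Qed.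

Lemma wbinom_spec_xycoeff : wbinom_spec w (xycoeff w).
Proof.
split=> [n|n|n k nk0]; first by rewrite xycoeff_ge0 ?coef1_n0.
  have [n_lt0|n_ge0] := ltrP n 0; first by rewrite xycoeff_lt0 ?coef2_nn.
  by rewrite xycoeff_ge0 // -(gez0_abs n_ge0) coef1_coef2_nat gez0_abs ?coef2_nn.
have [k_gt0|k_le0] := ltrP 0 k.
  by rewrite !xycoeff_ge0 ?coef1S //; lia.
have [k0|k_ne0] := eqVneq k 0; last by rewrite !xycoeff_lt0 ?coef2S //; lia.
rewrite k0 xycoeff_ge0 // xycoeff_ge0 // xycoeff_lt0 // !coef1_n0 sub0r.
suff -> : coef2 n (-1) = 0 by rewrite mul0r addr0.
have [n_lt|n_ge] := ltrP n (-1); first exact: coef2_gt.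
have [m ->] : exists m : nat, n = m%:Z.
  by exists `|n|%N; move: nk0; rewrite k0 xpair_eqE eqxx andbT; lia.
by rewrite -coef1_coef2_nat coef1_lt0.
Qed.

End Binomial.

Section Uniqueness.
Variable R : comUnitRingType.
Variable w : weights R.
Hypothesis uw : unitw w.
Variable D : int -> int -> R.
Hypothesis D_n0 : forall n, D n 0 = 0.
Hypothesis D_nn : forall n, D n n = 0.
Hypothesis DS : forall n k : int, (n + 1, k) != (0, 0) ->
  D (n + 1) k = D n k + D n (k - 1) * BigW w k (n + 1 - k).

Let column_zero k := forall n, D n k = 0.

Lemma column_zero_pred k : column_zero k -> column_zero (k - 1).
Proof.
move=> Dk n; have [/eqP|nk] := eqVneq (n + 1, k) (0, 0).
  by rewrite xpair_eqE => /andP[/eqP n1 /eqP ->]; rewrite (_ : n = 0 - 1) ?D_nn //; lia.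
have := DS nk; rewrite !Dk add0r => /esym/eqP.
by rewrite (mulIr_eq0 _ (mulIr (BigW_unit _ _ uw))) => /eqP.
Qed.

Lemma column_zero_succ k : column_zero k -> column_zero (k + 1).
Proof.
move=> Dk; have [k1|k1] := eqVneq (k + 1) 0; first by move=> n; rewrite k1.
have D_succ n : D (n + 1) (k + 1) = D n (k + 1).
  by rewrite DS ?addrK ?Dk ?mul0r ?addr0 // xpair_eqE negb_and k1 orbT.
rewrite /column_zero; apply: (int_ind_from (m0 := k + 1)) => [|n|n]; first exact: D_nn.
  by rewrite D_succ.
by rewrite D_succ.
Qed.

Lemma wbinom_homog0 n k : D n k = 0.
Proof.
suff: column_zero k by apply.
move: k; apply: (int_ind_from (m0 := 0)) => [|k|k].
- exact: D_n0.
- exact: column_zero_succ.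
- by move=> /column_zero_pred; rewrite addrK.
Qed.

End Uniqueness.

Lemma wbinom_uniq (R : comUnitRingType) (w : weights R) (B1 B2 : int -> int -> R) :
  unitw w -> wbinom_spec w B1 -> wbinom_spec w B2 -> forall n k, B1 n k = B2 n k.
Proof.
move=> uw [B1_n0 B1_nn B1S] [B2_n0 B2_nn B2S] n k; apply/eqP; rewrite -subr_eq0; apply/eqP.
apply: (@wbinom_homog0 R w uw (fun n k => B1 n k - B2 n k)) => [m|m|m j mj].
- by rewrite B1_n0 B2_n0 subrr.
- by rewrite B1_nn B2_nn subrr.
- by rewrite B1S // B2S //; ring.
Qed.

Theorem theorem7 (R : comUnitRingType) (w : int -> int -> R)
    (hw : forall s t : int, w s t \is a GRing.unit) :
  (exists B : int -> int -> R, wbinom_spec w B) /\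
  (forall B : int -> int -> R, wbinom_spec w B ->
     forall n k : int, xycoeff w n k = B n k).
Proof.
have xycoeff_spec := wbinom_spec_xycoeff hw.
split; first by exists (xycoeff w).
by move=> B wB; apply: wbinom_uniq xycoeff_spec wB.
Qed.
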